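(* Let $D$ be an integral domain of characteristic zero. Suppose that every $D$-algebra endomorphism $f$ of $D[x,y]$ with $\operatorname{Jac}(f(x),f(y))\in D^*$ is an automorphism of $D[x,y]$. Then for all $A,B,w\in D[x,y]$ with $\operatorname{Jac}(A,B)\in D^*$ and $\operatorname{Jac}(A,w)=0$, one has $w\in D[A]$.
   Context: $\operatorname{Jac}(u,v):=u_xv_y-u_yv_x$ for $u,v\in D[x,y]$. $D^*$ is the group of units of $D$. $D[A]$ is the $D$-subalgebra of $D[x,y]$ generated by $A$. *)

(* D[x,y] is modelled as {poly {poly D}}:
   the inner variable is x ('X%:P), the outer variable is y ('X). *)
From HB Require Import structures.
From mathcomp Require Import all_boot all_order all_algebra.
Set Implicit Arguments. Unset Strict Implicit. Unset Printing Implicit Defensive.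
Import Order.TTheory GRing.Theory Num.Theory.
Local Open Scope ring_scope.

Notation bipoly D := {poly {poly D}}.

Definition varx (D : idomainType) : bipoly D := 'X%:P.
Definition vary (D : idomainType) : bipoly D := 'X.

Definition cst (D : idomainType) (a : D) : bipoly D := a%:P%:P.

Definition dx (D : idomainType) (p : bipoly D) : bipoly D := map_poly deriv p.
Definition dy (D : idomainType) (p : bipoly D) : bipoly D := deriv p.

Definition Jac (D : idomainType) (u v : bipoly D) : bipoly D :=
  dx u * dy v - dy u * dx v.

Definition is_Dunit (D : idomainType) (p : bipoly D) : Prop :=
  exists c : D, c \is a GRing.unit /\ p = cst c.

Definition is_Dalg_endo (D : idomainType) (f : bipoly D -> bipoly D) : Prop :=
  [/\ forall p q, f (p + q) = f p + f q,
      forall p q, f (p * q) = f p * f q,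
      f 1 = 1
    & forall a : D, f (cst a) = cst a].

Definition peval (D : idomainType) (g : {poly D}) (A : bipoly D) : bipoly D :=
  (map_poly (@cst D) g).[A].

Definition in_Dalg_gen (D : idomainType) (A w : bipoly D) : Prop :=
  exists g : {poly D}, w = peval g A.

From HB Require Import structures.
From mathcomp Require Import all_boot all_order all_algebra.
From mathcomp Require Import ring.
Set Implicit Arguments.
Unset Strict Implicit.
Import GRing.Theory.
Local Open Scope ring_scope.

(* The substitution F : x |-> A, y |-> B has Jacobian Jac(A,B), a unit, so by the
   hypothesis it is an automorphism; write w = F v.  The chain rule gives
   Jac(A, w) = F(Jac(x, v)) Jac(A, B) = F(v_y) Jac(A, B), so v_y = 0.  In
   characteristic zero v is then a polynomial in x alone, and w = F v = v(A). *)

Section Bivariate.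

Variable D : idomainType.

Lemma dxD (p q : bipoly D) : dx (p + q) = dx p + dx q.
Proof. by rewrite /dx raddfD. Qed.

Lemma dxM (p q : bipoly D) : dx (p * q) = dx p * q + p * dx q.
Proof.
apply/polyP=> i; rewrite /dx coefD !coef_map /= !coefM -big_split /= raddf_sum.
by apply: eq_bigr => j _; rewrite /= derivM !coef_map.
Qed.

Lemma dx_cst (a : D) : dx (cst a) = 0.
Proof. by rewrite /dx /cst map_polyC /= derivC. Qed.

Lemma dyD (p q : bipoly D) : dy (p + q) = dy p + dy q.
Proof. exact: derivD. Qed.

Lemma dyM (p q : bipoly D) : dy (p * q) = dy p * q + p * dy q.
Proof. exact: derivM. Qed.

Lemma dy_cst (a : D) : dy (cst a) = 0.
Proof. by rewrite /dy /cst derivC. Qed.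

Lemma dx_varx : dx (varx D) = 1.
Proof. by rewrite /dx /varx map_polyC /= derivX. Qed.

Lemma dy_varx : dy (varx D) = 0.
Proof. by rewrite /dy /varx derivC. Qed.

Lemma dx_vary : dx (vary D) = 0.
Proof.
apply/polyP=> i; rewrite /dx /vary coef_map /= coefX coef0.
by case: (i == 1)%N; rewrite ?derivC ?deriv0.
Qed.

Lemma dy_vary : dy (vary D) = 1.
Proof. by rewrite /dy /vary derivX. Qed.

Lemma Jac_varxl (v : bipoly D) : Jac (varx D) v = dy v.
Proof. by rewrite /Jac dx_varx dy_varx mul1r mul0r subr0. Qed.

Lemma dy_eq0_polyC (v : bipoly D) :
  [pchar D] =i pred0 -> dy v = 0 -> v = (v`_0)%:P.
Proof.
move=> char0 dv0; apply/polyP => -[|i]; rewrite coefC //=.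
have /eqP := congr1 (fun p : bipoly D => p`_i) dv0.
rewrite /dy coef_deriv coef0 -mulr_natr mulf_eq0 => /orP [/eqP //|].
by rewrite -polyC_natr polyC_eq0 ((pcharf0P D).1 char0).
Qed.

Lemma cst_unit_neq0 (c : D) : c \is a GRing.unit -> cst c != 0.
Proof.
by move=> cU; rewrite /cst !polyC_eq0; apply: contraTneq cU => ->; rewrite unitr0.
Qed.

Section ChainRule.

Variables (d : bipoly D -> bipoly D) (F : {rmorphism bipoly D -> bipoly D}).
Hypotheses (dD : forall p q, d (p + q) = d p + d q)
           (dM : forall p q, d (p * q) = d p * q + p * d q)
           (d_cst : forall a, d (cst a) = 0)
           (F_cst : forall a, F (cst a) = cst a).

Lemma derivation_rmorph (p : bipoly D) :
  d (F p) = F (dx p) * d (F (varx D)) + F (dy p) * d (F (vary D)).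
Proof.
pose P p := d (F p) = F (dx p) * d (F (varx D)) + F (dy p) * d (F (vary D)).
have PD p1 p2 : P p1 -> P p2 -> P (p1 + p2).
  by rewrite /P => H1 H2; rewrite rmorphD dD H1 H2 dxD dyD !rmorphD; ring.
have PM p1 p2 : P p1 -> P p2 -> P (p1 * p2).
  by rewrite /P => H1 H2; rewrite rmorphM dM H1 H2 dxM dyM !rmorphD !rmorphM; ring.
have P_cst a : P (cst a).
  by rewrite /P F_cst d_cst dx_cst dy_cst rmorph0 !mul0r addr0.
have Px : P (varx D) by rewrite /P dx_varx dy_varx rmorph1 rmorph0 mul0r addr0 mul1r.
have Py : P (vary D) by rewrite /P dx_vary dy_vary rmorph1 rmorph0 mul0r add0r mul1r.
have P0 : P 0 by have := P_cst 0; rewrite /cst !polyC0.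
have PC (c : {poly D}) : P c%:P.
  elim/poly_ind: c => [|r e IH]; first by rewrite polyC0.
  by rewrite rmorphD rmorphM /=; apply: PD (P_cst e); apply: PM.
elim/poly_ind: p => [//|q c IH].
by apply: PD; [apply: PM | apply: PC].
Qed.

End ChainRule.

Lemma Jac_rmorph (F : {rmorphism bipoly D -> bipoly D}) (p q : bipoly D) :
  (forall a, F (cst a) = cst a) ->
  Jac (F p) (F q) = F (Jac p q) * Jac (F (varx D)) (F (vary D)).
Proof.
move=> F_cst.
have dxF := derivation_rmorph dxD dxM dx_cst F_cst.
have dyF := derivation_rmorph dyD dyM dy_cst F_cst.
by rewrite /Jac (dxF p) (dxF q) (dyF p) (dyF q) rmorphB !rmorphM; ring.
Qed.

Definition eval_x (A : bipoly D) : {rmorphism {poly D} -> bipoly D} :=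
  @horner_morph _ _ (polyC \o polyC) A (fun a => mulrC A (cst a)).

Definition subst_xy (A B : bipoly D) : {rmorphism bipoly D -> bipoly D} :=
  horner_morph (fun p : {poly D} => mulrC B (eval_x A p)).

Variables A B : bipoly D.

Lemma subst_xy_polyC (g : {poly D}) : subst_xy A B g%:P = peval g A.
Proof. exact: horner_morphC. Qed.

Lemma subst_xy_cst (a : D) : subst_xy A B (cst a) = cst a.
Proof. exact: etrans (horner_morphC _ a%:P) (horner_morphC _ a). Qed.

Lemma subst_xy_varx : subst_xy A B (varx D) = A.
Proof. exact: etrans (horner_morphC _ 'X) (horner_morphX _). Qed.

Lemma subst_xy_vary : subst_xy A B (vary D) = B.
Proof. exact: horner_morphX. Qed.

Lemma subst_xy_Dalg_endo : is_Dalg_endo (subst_xy A B).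
Proof.
by split; [exact: rmorphD | exact: rmorphM | exact: rmorph1 | exact: subst_xy_cst].
Qed.

End Bivariate.

Theorem theorem3p5 (D : idomainType)
  (char0 : [pchar D] =i pred0)
  (JC : forall f : bipoly D -> bipoly D,
      is_Dalg_endo f -> is_Dunit (Jac (f (varx D)) (f (vary D))) -> bijective f) :
  forall A B w : bipoly D,
    is_Dunit (Jac A B) -> Jac A w = 0 -> in_Dalg_gen A w.
Proof.
move=> A B w [c [cU JAB]] JAw.
pose F := subst_xy A B.
have JF : Jac (F (varx D)) (F (vary D)) = cst c by rewrite subst_xy_varx subst_xy_vary.
have [G FG GF] := JC F (subst_xy_Dalg_endo A B) (ex_intro _ c (conj cU JF)).
pose v := G w.
have Fv : F v = w by rewrite /v GF.
have FdyvC : F (dy v) * cst c = 0.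
  rewrite -JF -Jac_varxl -Jac_rmorph; last exact: subst_xy_cst.
  by rewrite subst_xy_varx Fv.
have dyv0 : dy v = 0.
  apply: (can_inj FG); rewrite rmorph0.
  by apply/eqP; move/eqP: FdyvC; rewrite mulf_eq0 (negbTE (cst_unit_neq0 cU)) orbF.
by exists v`_0; rewrite -Fv {1}(dy_eq0_polyC char0 dyv0) subst_xy_polyC.
Qed.
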